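(* Let $k=4$, $r\ge 2$, $d=2^r$, $n\ge d$ and $i=n-d$. Then in $\mathbb{F}_2[w_2,w_3,w_4]$, \[ \beta_3^{i-1}q_n+w_4\beta_3^{i-2}q_{n-1}+\big(w_2\beta_3^{i-1}+w_4^2\beta_3^{i-3}\big)q_{n-2}+\beta_3^iq_{n-3}=0, \] a homogeneous relation of degree $(d-3)+4i$, where $\beta_3^0=1$, $\beta_3^m=0$ for $m<0$, and $\beta_3^{m+1}=w_3\beta_3^m+w_2w_4\beta_3^{m-1}+w_4^3\beta_3^{m-3}$ for $m\ge 0$.
   Context: In $\mathbb{F}_2[w_2,w_3,w_4]$ ($\deg w_i=i$), $q_0=1$, $q_m=0$ for $m<0$, and $q_m=w_2q_{m-2}+w_3q_{m-3}+w_4q_{m-4}$ for $m\ge1$. *)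

From mathcomp Require Import all_boot all_algebra.
From mathcomp Require Import mpoly.
Set Implicit Arguments. Unset Strict Implicit. Unset Printing Implicit Defensive.
Import GRing.Theory.
Local Open Scope ring_scope.

Definition PR := {mpoly 'F_2[3]}.
Definition w2 : PR := 'X_(inord 0).
Definition w3 : PR := 'X_(inord 1).
Definition w4 : PR := 'X_(inord 2).

(* Window (q_m, q_{m-1}, q_{m-2}, q_{m-3}) for m : nat, with q_j = 0 for j < 0. *)
Fixpoint qwin (m : nat) : PR * PR * PR * PR :=
  match m with
  | 0%N => (1, 0, 0, 0)
  | m'.+1 => let: (a, b, c, d) := qwin m' in
             (w2 * b + w3 * c + w4 * d, a, b, c)
  end.

(* q_m for integer m: q_0 = 1, q_m = 0 for m < 0,
   q_m = w2 q_{m-2} + w3 q_{m-3} + w4 q_{m-4} for m >= 1. *)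
Definition q (m : int) : PR :=
  match m with
  | Posz k => (qwin k).1.1.1
  | Negz _ => 0
  end.

(* Window (b_m, b_{m-1}, b_{m-2}, b_{m-3}) for beta_3^m, m : nat. *)
Fixpoint bwin (m : nat) : PR * PR * PR * PR :=
  match m with
  | 0%N => (1, 0, 0, 0)
  | m'.+1 => let: (a, b, c, d) := bwin m' in
             (w3 * a + w2 * w4 * b + w4 ^+ 3 * d, a, b, c)
  end.

(* beta_3^m for integer m (a name, not a power): beta_3^0 = 1, beta_3^m = 0
   for m < 0, beta_3^{m+1} = w3 beta_3^m + w2 w4 beta_3^{m-1} + w4^3 beta_3^{m-3}. *)
Definition beta3 (m : int) : PR :=
  match m with
  | Posz k => (bwin k).1.1.1
  | Negz _ => 0
  end.

From mathcomp Require Import all_boot all_algebra.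
From mathcomp Require Import mpoly zify ring.
Import GRing.Theory.
Local Open Scope ring_scope.

(* Write R(i, N) for the left-hand side of the relation, viewed
   as a function of two independent integer indices.  Using the recurrences
   of q and beta_3 (and 2 = 0), one checks the shift identity
       R(i+1, N+1) = w4 * R(i, N)        for i, N >= 0,
   so R(n-d, n) = w4^(n-d) * R(0, d), and R(0, d) = q_{d-3} because every
   beta_3 with negative index vanishes.  It remains to show q_{2^r - 3} = 0
   for r >= 2.  This follows from the characteristic-2 doubling formulas
       q_{2m}   = q_m^2 + w2 q_{m-1}^2 + w4 q_{m-2}^2,
       q_{2m+3} = w3 q_m^2,
   proved together by strong induction on m; since q_1 = 0, the second one
   gives q_{2^(r+1) - 3} = w3 q_{2^r - 3}^2 = 0 inductively. *)

(* F_2[w2,w3,w4] has characteristic 2; equations are proved with [ring]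
   up to an explicit multiple of 2. *)
Lemma two_eq0 : (2%:R : PR) = 0.
Proof.
have two_F2 : (2%:R : 'F_2) = 0 by apply/eqP.
by rewrite -(rmorph_nat (@mpolyC 3 'F_2)) two_F2 rmorph0.
Qed.

Lemma eq_up_to_two (c a b : PR) : a = b + c * 2%:R -> a = b.
Proof. by rewrite two_eq0 mulr0 addr0. Qed.

Lemma q_neg (m : int) : m < 0 -> q m = 0.
Proof. by case: m. Qed.

Lemma beta3_neg (m : int) : m < 0 -> beta3 m = 0.
Proof. by case: m. Qed.

Lemma q0 : q 0 = 1.
Proof. by []. Qed.

Lemma q1 : q 1 = 0.
Proof. by rewrite /q /= !mulr0 !addr0. Qed.

Lemma qwinE (k : nat) :
  qwin k = (q k, q (Posz k - 1), q (Posz k - 2), q (Posz k - 3)).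
Proof.
elim: k => [|k IH] //.
have -> : Posz k.+1 - 1 = k by lia.
have -> : Posz k.+1 - 2 = Posz k - 1 by lia.
have -> : Posz k.+1 - 3 = Posz k - 2 by lia.
by rewrite {2}/q /= IH.
Qed.

Lemma q_rec (m : int) : 0 <= m ->
  q (m + 1) = w2 * q (m - 1) + w3 * q (m - 2) + w4 * q (m - 3).
Proof.
case: m => // k _.
have -> : Posz k + 1 = Posz k.+1 by lia.
by rewrite [LHS]/q [LHS]/= qwinE.
Qed.

Lemma bwinE (k : nat) :
  bwin k = (beta3 k, beta3 (Posz k - 1), beta3 (Posz k - 2), beta3 (Posz k - 3)).
Proof.
elim: k => [|k IH] //.
have -> : Posz k.+1 - 1 = k by lia.
have -> : Posz k.+1 - 2 = Posz k - 1 by lia.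
have -> : Posz k.+1 - 3 = Posz k - 2 by lia.
by rewrite {2}/beta3 /= IH.
Qed.

Lemma beta3_rec (m : int) : 0 <= m ->
  beta3 (m + 1) = w3 * beta3 m + w2 * w4 * beta3 (m - 1) + w4 ^+ 3 * beta3 (m - 3).
Proof.
case: m => // k _.
have -> : Posz k + 1 = Posz k.+1 by lia.
by rewrite [LHS]/beta3 [LHS]/= bwinE.
Qed.

Definition relation (i N : int) : PR :=
  beta3 (i - 1) * q N + w4 * beta3 (i - 2) * q (N - 1)
  + (w2 * beta3 (i - 1) + w4 ^+ 2 * beta3 (i - 3)) * q (N - 2)
  + beta3 i * q (N - 3).

Lemma relation_shift (i N : int) : 0 <= i -> 0 <= N ->
  relation (i + 1) (N + 1) = w4 * relation i N.
Proof.
move=> hi hN; rewrite /relation.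
have -> : i + 1 - 1 = i by lia.
have -> : i + 1 - 2 = i - 1 by lia.
have -> : i + 1 - 3 = i - 2 by lia.
have -> : N + 1 - 1 = N by lia.
have -> : N + 1 - 2 = N - 1 by lia.
have -> : N + 1 - 3 = N - 2 by lia.
rewrite beta3_rec // q_rec //.
apply: (eq_up_to_two (w2 * beta3 i * q (N - 1) + w3 * beta3 i * q (N - 2))).
ring.
Qed.

Lemma relation_iter (d k : nat) :
  relation k (d + k)%N = w4 ^+ k * relation 0 d.
Proof.
elim: k => [|k IH]; first by rewrite addn0 mul1r.
have -> : Posz k.+1 = Posz k + 1 by lia.
have -> : Posz (d + k.+1) = Posz (d + k) + 1 by lia.
by rewrite relation_shift // IH exprS mulrA.
Qed.

(* At i = 0 only the term beta_3^0 q_{N-3} survives. *)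
Lemma relation_base (d : nat) : relation 0 d = q (Posz d - 3).
Proof.
rewrite /relation !(@beta3_neg (_ - _)) // (_ : beta3 0 = 1) //.
rewrite !mulr0 !mul0r !add0r mul1r; ring.
Qed.

(* The doubling formulas for q (Frobenius squaring in characteristic 2). *)
Definition q_even_formula (m : int) : Prop :=
  q (2 * m) = q m ^+ 2 + w2 * q (m - 1) ^+ 2 + w4 * q (m - 2) ^+ 2.

Definition q_odd_formula (m : int) : Prop :=
  q (2 * m + 3) = w3 * q m ^+ 2.

Lemma q_doubling_neg (m : int) : m < 0 -> q_even_formula m /\ q_odd_formula m.
Proof.
move=> hm; split.
  by rewrite /q_even_formula !q_neg; try lia; rewrite expr0n /= !mulr0 !addr0.
rewrite /q_odd_formula.
have [->|hm1] := eqVneq m (-1).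
  by rewrite (_ : 2 * -1 + 3 = 1) // q1 q_neg // expr0n /= mulr0.
by rewrite !q_neg; try lia; rewrite expr0n /= mulr0.
Qed.

(* q_{2m} = w2 q_{2m-2} + w3 q_{2m-3} + w4 q_{2m-4}: expand by induction and
   recombine the squares using q_m = w2 q_{m-2} + w3 q_{m-3} + w4 q_{m-4}. *)
Lemma q_even_step (m : int) : 0 < m ->
  q_even_formula (m - 1) -> q_even_formula (m - 2) -> q_odd_formula (m - 3) ->
  q_even_formula m.
Proof.
move=> hm; rewrite /q_even_formula /q_odd_formula.
have -> : m - 1 - 1 = m - 2 by lia.
have -> : m - 1 - 2 = m - 3 by lia.
have -> : m - 2 - 1 = m - 3 by lia.
have -> : m - 2 - 2 = m - 4 by lia.
have -> : 2 * m = (2 * m - 1) + 1 by lia.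
rewrite q_rec; last by lia.
have -> : 2 * m - 1 - 1 = 2 * (m - 1) by lia.
have -> : 2 * m - 1 - 2 = 2 * (m - 3) + 3 by lia.
have -> : 2 * m - 1 - 3 = 2 * (m - 2) by lia.
move=> -> -> ->.
have q_m : q m = w2 * q (m - 2) + w3 * q (m - 3) + w4 * q (m - 4).
  have := q_rec (m - 1) ltac:(lia).
  have -> : m - 1 + 1 = m by lia.
  have -> : m - 1 - 1 = m - 2 by lia.
  have -> : m - 1 - 2 = m - 3 by lia.
  by have -> : m - 1 - 3 = m - 4 by lia.
rewrite q_m.
apply: (eq_up_to_two (w2 * w4 * q (m - 3) ^+ 2
   - (w2 * q (m - 2) * (w3 * q (m - 3)) + w2 * q (m - 2) * (w4 * q (m - 4))
      + w3 * q (m - 3) * (w4 * q (m - 4))))).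
ring.
Qed.

Lemma q_odd_step (m : int) : 0 <= m ->
  q_even_formula m -> q_odd_formula (m - 1) -> q_odd_formula (m - 2) ->
  q_odd_formula m.
Proof.
move=> hm; rewrite /q_even_formula /q_odd_formula.
have -> : 2 * m + 3 = (2 * m + 2) + 1 by lia.
rewrite q_rec; last by lia.
have -> : 2 * m + 2 - 1 = 2 * (m - 1) + 3 by lia.
have -> : 2 * m + 2 - 2 = 2 * m by lia.
have -> : 2 * m + 2 - 3 = 2 * (m - 2) + 3 by lia.
move=> -> -> ->.
apply: (eq_up_to_two (w2 * w3 * q (m - 1) ^+ 2 + w3 * w4 * q (m - 2) ^+ 2)).
ring.
Qed.

Lemma q_doubling (m : int) : q_even_formula m /\ q_odd_formula m.
Proof.
suff bounded k : forall m : int, m < Posz k -> q_even_formula m /\ q_odd_formula m.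
  by apply: (bounded `|m|.+1); lia.
elim: k => [|k IH] {}m hm; first exact: q_doubling_neg.
have [hlt|hge] := boolP (m < Posz k); first exact: IH.
have [->|m_pos] := eqVneq m 0.
  have even0 : q_even_formula 0.
    by rewrite /q_even_formula mulr0 q0 !q_neg // expr1n expr0n /= !mulr0 !addr0.
  split => //; apply: q_odd_step => //.
    by case: (IH (0 - 1) ltac:(lia)).
  by case: (IH (0 - 2) ltac:(lia)).
have even_m : q_even_formula m.
  apply: q_even_step; first by lia.
  - by case: (IH (m - 1) ltac:(lia)).
  - by case: (IH (m - 2) ltac:(lia)).
  - by case: (IH (m - 3) ltac:(lia)).
split => //; apply: q_odd_step => //; first by lia.
  by case: (IH (m - 1) ltac:(lia)).
by case: (IH (m - 2) ltac:(lia)).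
Qed.

(* q_{2^r - 3} = 0 for r >= 2, by q_1 = 0 and q_{2m+3} = w3 q_m^2. *)
Lemma q_pow2_sub3 (r : nat) : (2 <= r)%N -> q (Posz (2 ^ r) - 3) = 0.
Proof.
elim: r => // r IH hr.
have [->|hr1] := eqVneq r 1%N; first by rewrite (_ : Posz (2 ^ 2) - 3 = 1) ?q1.
have [_ odd_id] := q_doubling (Posz (2 ^ r) - 3).
move: odd_id; rewrite /q_odd_formula IH; last by lia.
have -> : 2 * (Posz (2 ^ r) - 3) + 3 = Posz (2 ^ r.+1) - 3 by rewrite expnS; lia.
by rewrite expr0n /= mulr0.
Qed.

Theorem mainTheorem13 (r n : nat) (hr : (2 <= r)%N) (hn : (2 ^ r <= n)%N) :
  let i : int := Posz (n - 2 ^ r)%N in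
  let N : int := Posz n in
  beta3 (i - 1) * q N + w4 * beta3 (i - 2) * q (N - 1)
  + (w2 * beta3 (i - 1) + w4 ^+ 2 * beta3 (i - 3)) * q (N - 2)
  + beta3 i * q (N - 3) = 0.
Proof.
move=> i N.
have := relation_iter (2 ^ r) (n - 2 ^ r).
rewrite subnKC // relation_base q_pow2_sub3 // mulr0.
by rewrite /relation.
Qed.
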